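(* Let $t\in\mathbb{R}$ and $u\in\mathbb{R}\setminus\{0,1\}$. Then $\mathfrak{g}_{t,u}\in\mathcal{P}^s_{4,4}$ if and only if $V_F(t,\omega(u))\ge0$. Moreover $-\mathfrak{g}_{t,u}\notin\mathcal{P}^s_{4,4}$.
   Context: Variables $a,b,c,d$. Put $s_0=a^4+b^4+c^4+d^4-4abcd$; $s_1=T_{3,1}-12abcd$ with $T_{3,1}=\sum_{i\ne j}x_i^3x_j$; $s_2=\sum_{i<j}x_i^2x_j^2-6abcd$; $s_3=T_{2,1,1}-12abcd$ with $T_{2,1,1}=\sum_i x_i^2\sum_{j<k,\ j,k\ne i}x_jx_k$; $s_4=abcd$ (here $(x_1,x_2,x_3,x_4)=(a,b,c,d)$). Let $\omega(u)=u+\frac1u-2$ and $p^G_0(t,w)=(4t+2)w^2-3(t-1)^2w$, $p^G_1(t,w)=-2(t+1)^2w^2+2(t+1)(t-1)^2w$, $p^G_2(t,w)=4t^2w^2-2(t-1)^2(2t-1)w+2(t-1)^4$, $p^G_3(t,w)=2(t+1)^2w^2-(t-1)^2(t^2+3)w-2(t-1)^4$, $p^G_4(t,w)=2(t-1)^4w^2$, and for $u\ne0$, $\mathfrak{g}_{t,u}=u^2\sum_{i=0}^4p^G_i(t,\omega(u))s_i$. Let $V_F(t,w)=(3+6t-t^2)w^2-6(t-1)^2w$. $\mathcal{P}^s_{4,4}$ is the cone of symmetric real quartic forms in $a,b,c,d$ that are nonnegative on $\mathbb{R}^4$. *)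

From Stdlib Require Import Reals Lra.
Open Scope R_scope.

Definition form4 := R -> R -> R -> R -> R.

Definition s0 : form4 := fun a b c d => a^4 + b^4 + c^4 + d^4 - 4*a*b*c*d.

Definition T31 : form4 := fun a b c d =>
  a^3*(b+c+d) + b^3*(a+c+d) + c^3*(a+b+d) + d^3*(a+b+c).
Definition s1 : form4 := fun a b c d => T31 a b c d - 12*a*b*c*d.

Definition s2 : form4 := fun a b c d =>
  a^2*b^2 + a^2*c^2 + a^2*d^2 + b^2*c^2 + b^2*d^2 + c^2*d^2 - 6*a*b*c*d.

Definition T211 : form4 := fun a b c d =>
  a^2*(b*c + b*d + c*d) + b^2*(a*c + a*d + c*d)
  + c^2*(a*b + a*d + b*d) + d^2*(a*b + a*c + b*c).
Definition s3 : form4 := fun a b c d => T211 a b c d - 12*a*b*c*d.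

Definition s4 : form4 := fun a b c d => a*b*c*d.

Definition omega (u : R) : R := u + / u - 2.

Definition pG0 (t w : R) : R := (4*t+2)*w^2 - 3*(t-1)^2*w.
Definition pG1 (t w : R) : R := -2*(t+1)^2*w^2 + 2*(t+1)*(t-1)^2*w.
Definition pG2 (t w : R) : R := 4*t^2*w^2 - 2*(t-1)^2*(2*t-1)*w + 2*(t-1)^4.
Definition pG3 (t w : R) : R := 2*(t+1)^2*w^2 - (t-1)^2*(t^2+3)*w - 2*(t-1)^4.
Definition pG4 (t w : R) : R := 2*(t-1)^4*w^2.

Definition gform (t u : R) : form4 := fun a b c d =>
  let w := omega u in
  u^2 * (pG0 t w * s0 a b c d + pG1 t w * s1 a b c d + pG2 t w * s2 a b c d
         + pG3 t w * s3 a b c d + pG4 t w * s4 a b c d).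

Definition VF (t w : R) : R := (3 + 6*t - t^2)*w^2 - 6*(t-1)^2*w.

Definition is_quartic_form (f : form4) : Prop :=
  exists (coef : nat -> nat -> nat -> nat -> R),
    forall a b c d, f a b c d =
      sum_f_R0 (fun i => sum_f_R0 (fun j => sum_f_R0 (fun k =>
        if (i + j + k <=? 4)%nat then
          coef i j k (4 - i - j - k)%nat * a^i * b^j * c^k * d^(4 - i - j - k)
        else 0) 4) 4) 4.

(* Symmetric under all permutations of the variables (generated by
   the transposition (a b) and the 4-cycle (a b c d)). *)
Definition is_symmetric4 (f : form4) : Prop :=
  forall a b c d, f a b c d = f b a c d /\ f a b c d = f b c d a.

Definition in_Ps44 (f : form4) : Prop :=
  is_quartic_form f /\ is_symmetric4 f /\ forall a b c d, 0 <= f a b c d.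

Definition opp_form (f : form4) : form4 := fun a b c d => - f a b c d.

(* Put [w = omega u], so that [g = u^2 * gsum t w].  In the mean [m] and the
   centred power sums [q2 = 12 r^2], [q3], [q4] of the variables, [gsum] is affine
   in [(q3, q4)], and [(q3, q4)] ranges over a triangle whose vertices are attained
   at points of types (2,2) and (3,1).  So [gsum >= 0] everywhere as soon as it
   holds there.  At the (2,2) vertex [gsum] is [2 (t-1)^4] times a square; at
   [(p,q,q,q)] it is [(p - t q)^2] times a binary quadratic form in [(p, q)] with
   discriminant [-4 (t-1)^2 w^2 VF t w], so this form is nonnegative exactly
   when [VF t w >= 0] (for [w <> 0]).  Finally [gsum] is positive at [(1,1,1,1)] or,
   when [t = 1], at [(0,1,1,1)], so [-g] is never nonnegative. *)

From Stdlib Require Import Reals Lra Psatz.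
Open Scope R_scope.

Lemma pow2_gt_0 (x : R) : x <> 0 -> 0 < x ^ 2.
Proof. intro hx. destruct (Rtotal_order x 0) as [h|[h|h]]; [nra|contradiction|nra]. Qed.

Lemma omega_neq0 (u : R) : u <> 0 -> u <> 1 -> omega u <> 0.
Proof.
  intros hu0 hu1 hw.
  assert (E : u * omega u = (u - 1) ^ 2) by (unfold omega; field; exact hu0).
  rewrite hw, Rmult_0_r in E.
  apply hu1. nra.
Qed.

Definition bqf (a b c p q : R) : R := a * p ^ 2 + b * p * q + c * q ^ 2.

Lemma bqf_nonneg (a b c p q : R) :
  0 <= a -> 0 <= c -> b ^ 2 <= 4 * a * c -> 0 <= bqf a b c p q.
Proof.
  intros ha hc hd. unfold bqf.
  destruct (Req_dec a 0) as [a0|a0].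
  - assert (b = 0) by (subst a; nra). subst a b. nra.
  - assert (E : 4 * a * (a * p ^ 2 + b * p * q + c * q ^ 2)
                = (2 * a * p + b * q) ^ 2 + (4 * a * c - b ^ 2) * q ^ 2) by ring.
    pose proof (pow2_ge_0 (2 * a * p + b * q)). pose proof (pow2_ge_0 q).
    assert (0 <= (4 * a * c - b ^ 2) * q ^ 2) by (apply Rmult_le_pos; lra).
    nra.
Qed.

Lemma bqf_discr_le (a b c : R) :
  (forall p q, 0 <= bqf a b c p q) -> b ^ 2 <= 4 * a * c.
Proof.
  intro hf. unfold bqf in hf.
  pose proof (hf 1 0) as ha.
  destruct (Req_dec a 0) as [a0|a0].
  - subst a. pose proof (hf 0 1).
    destruct (Req_dec b 0) as [b0|b0]; [subst b; nra|].
    specialize (hf (- (c + 1) / b) 1).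
    replace (0 * (- (c + 1) / b) ^ 2 + b * (- (c + 1) / b) * 1 + c * 1 ^ 2) with (-1)
      in hf by (field; exact b0).
    lra.
  - specialize (hf (- b) (2 * a)).
    replace (a * (- b) ^ 2 + b * - b * (2 * a) + c * (2 * a) ^ 2)
      with (a * (4 * a * c - b ^ 2)) in hf by ring.
    assert (0 < a) by lra. nra.
Qed.

(* The mean of the values at [(k q + d, q)] and [(k q - d, q)] is
   [bqf a b c (k q) q + a d^2], which is negative for small [d] if the form is
   negative at [(k q, q)]. *)
Lemma bqf_nonneg_off_line (a b c k : R) :
  (forall p q, p <> k * q -> 0 <= bqf a b c p q) -> forall p q, 0 <= bqf a b c p q.
Proof.
  intros hf p q.
  destruct (Req_dec p (k * q)) as [e|e]; [|exact (hf p q e)].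
  subst p. set (f0 := bqf a b c (k * q) q).
  destruct (Rle_or_lt 0 f0) as [h|h]; [exact h|exfalso].
  set (s := - f0 / (2 * (a ^ 2 + 1))).
  assert (hs : 0 < s) by (unfold s; apply Rdiv_lt_0_compat; nra).
  set (d := sqrt s).
  assert (hd2 : d ^ 2 = s) by (apply pow2_sqrt; lra).
  assert (hd : d <> 0) by (intro e; rewrite e in hd2; lra).
  assert (hp := hf (k * q + d) q ltac:(lra)).
  assert (hm := hf (k * q - d) q ltac:(lra)).
  assert (E : bqf a b c (k * q + d) q + bqf a b c (k * q - d) q = 2 * f0 + 2 * a * d ^ 2)
    by (unfold f0, bqf; ring).
  rewrite hd2 in E.
  assert (hs' : s * (2 * (a ^ 2 + 1)) = - f0) by (unfold s; field; nra).
  assert (0 <= (a - 1) ^ 2 * s) by (apply Rmult_le_pos; [apply pow2_ge_0|lra]).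
  nra.
Qed.

Definition gsum (t w : R) : form4 := fun a b c d =>
  pG0 t w * s0 a b c d + pG1 t w * s1 a b c d + pG2 t w * s2 a b c d
  + pG3 t w * s3 a b c d + pG4 t w * s4 a b c d.

Lemma gform_gsum (t u a b c d : R) : gform t u a b c d = u ^ 2 * gsum t (omega u) a b c d.
Proof. reflexivity. Qed.

Definition tri_b (t w : R) : R :=
  2*t^2*w^2 + 6*t^2*w - 8*t*w^2 - 12*t*w - 6*w^2 + 6*w.

Definition tri_c (t w : R) : R := 6*w^2 - 3*(t-1)^2*w.

Lemma gsum_triple (t w p q : R) :
  gsum t w p q q q = (p - t * q) ^ 2 * bqf (pG0 t w) (tri_b t w) (tri_c t w) p q.
Proof.
  unfold gsum, bqf, tri_b, tri_c, pG0, pG1, pG2, pG3, pG4, s0, s1, s2, s3, s4, T31, T211.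
  ring.
Qed.

Lemma tri_discr (t w : R) :
  tri_b t w ^ 2 - 4 * pG0 t w * tri_c t w = - 4 * (t - 1) ^ 2 * w ^ 2 * VF t w.
Proof. unfold tri_b, tri_c, pG0, VF. ring. Qed.

Lemma pG0_VF (t w : R) : 2 * pG0 t w = VF t w + (t + 1) ^ 2 * w ^ 2.
Proof. unfold pG0, VF. ring. Qed.

Lemma tri_c_VF (t w : R) : 2 * tri_c t w = VF t w + (t - 3) ^ 2 * w ^ 2.
Proof. unfold tri_c, VF. ring. Qed.

Lemma gsum_triple_nonneg (t w p q : R) : 0 <= VF t w -> 0 <= gsum t w p q q q.
Proof.
  intro hV. rewrite gsum_triple.
  apply Rmult_le_pos; [apply pow2_ge_0|apply bqf_nonneg].
  - pose proof (pG0_VF t w). pose proof (pow2_ge_0 ((t + 1) * w)). nra.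
  - pose proof (tri_c_VF t w). pose proof (pow2_ge_0 ((t - 3) * w)). nra.
  - pose proof (tri_discr t w). pose proof (pow2_ge_0 ((t - 1) * w)). nra.
Qed.

Lemma VF_nonneg_of_gsum_nonneg (t w : R) :
  w <> 0 -> (forall a b c d, 0 <= gsum t w a b c d) -> 0 <= VF t w.
Proof.
  intros hw hg.
  assert (hoff : forall p q, p <> t * q -> 0 <= bqf (pG0 t w) (tri_b t w) (tri_c t w) p q).
  { intros p q hpq. specialize (hg p q q q). rewrite gsum_triple in hg.
    assert (0 < (p - t * q) ^ 2) by (apply pow2_gt_0; lra). nra. }
  pose proof (bqf_discr_le _ _ _ (bqf_nonneg_off_line _ _ _ _ hoff)) as hd.
  pose proof (tri_discr t w). pose proof (pow2_gt_0 w hw).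
  destruct (Req_dec t 1) as [e|e].
  - subst t. unfold VF. nra.
  - assert (0 < (t - 1) ^ 2 * w ^ 2) by (apply Rmult_lt_0_compat; [apply pow2_gt_0; lra|lra]).
    nra.
Qed.

Definition mean4 (a b c d : R) : R := (a + b + c + d) / 4.

Definition cmoment (k : nat) (a b c d : R) : R :=
  let m := mean4 a b c d in (a - m) ^ k + (b - m) ^ k + (c - m) ^ k + (d - m) ^ k.

(* [s0], ..., [s4] rewritten in the mean [m] and the centred power sums
   [q2], [q3], [q4] of the variables (Newton's identities). *)
Definition hsum (t w m q2 q3 q4 : R) : R :=
  pG0 t w * (8*m^2*q2 + 8/3*m*q3 - q2^2/2 + 2*q4)
  + pG1 t w * (12*m^2*q2 - 4*m*q3 - 3/2*q2^2 + 2*q4)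
  + pG2 t w * (4*m^2*q2 - 4*m*q3 - q2^2/4 + q4)
  + pG3 t w * (4*m^2*q2 - 4*m*q3 - 2*q2^2 + 4*q4)
  + pG4 t w * (m^4 - m^2*q2/2 + m*q3/3 + q2^2/8 - q4/4).

Lemma gsum_moments (t w a b c d : R) :
  gsum t w a b c d
  = hsum t w (mean4 a b c d) (cmoment 2 a b c d) (cmoment 3 a b c d) (cmoment 4 a b c d).
Proof.
  unfold gsum, hsum, cmoment, mean4, s0, s1, s2, s3, s4, T31, T211. field.
Qed.

Lemma hsum_two_two (t w m r : R) :
  hsum t w m (12 * r ^ 2) 0 (36 * r ^ 4) = 2 * (t - 1) ^ 4 * (3 * (w + 4) * r ^ 2 - w * m ^ 2) ^ 2.
Proof. unfold hsum, pG0, pG1, pG2, pG3, pG4. field. Qed.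

Lemma hsum_three_one (t w m r : R) :
  hsum t w m (12 * r ^ 2) (24 * r ^ 3) (84 * r ^ 4) = gsum t w (m + 3 * r) (m - r) (m - r) (m - r).
Proof.
  rewrite gsum_moments. unfold cmoment, mean4. f_equal; field.
Qed.

(* [hsum] is affine in [(q3, q4)]; the multipliers are [96 r^4] times the
   barycentric coordinates of [(q3, q4)] in the triangle with vertices
   [(0, 36 r^4)] and [(± 24 r^3, 84 r^4)]. *)
Lemma hsum_barycentric (t w m r q3 q4 : R) :
  96 * r ^ 4 * hsum t w m (12 * r ^ 2) q3 q4
  = 2 * (84 * r ^ 4 - q4) * hsum t w m (12 * r ^ 2) 0 (36 * r ^ 4)
    + (q4 - 36 * r ^ 4 + 2 * r * q3) * hsum t w m (12 * r ^ 2) (24 * r ^ 3) (84 * r ^ 4)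
    + (q4 - 36 * r ^ 4 - 2 * r * q3) * hsum t w m (12 * r ^ 2) (- (24 * r ^ 3)) (84 * r ^ 4).
Proof. unfold hsum. field. Qed.

Lemma hsum_nonneg_of_vertices (t w m r q3 q4 : R) : 0 < r ->
  0 <= 84 * r ^ 4 - q4 -> 0 <= q4 - 36 * r ^ 4 + 2 * r * q3 ->
  0 <= q4 - 36 * r ^ 4 - 2 * r * q3 ->
  0 <= hsum t w m (12 * r ^ 2) 0 (36 * r ^ 4) ->
  0 <= hsum t w m (12 * r ^ 2) (24 * r ^ 3) (84 * r ^ 4) ->
  0 <= hsum t w m (12 * r ^ 2) (- (24 * r ^ 3)) (84 * r ^ 4) ->
  0 <= hsum t w m (12 * r ^ 2) q3 q4.
Proof.
  intros hr l0 lp lm h0 hp hm.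
  pose proof (hsum_barycentric t w m r q3 q4) as E.
  assert (0 <= 96 * r ^ 4 * hsum t w m (12 * r ^ 2) q3 q4).
  { rewrite E. repeat apply Rplus_le_le_0_compat; apply Rmult_le_pos; lra. }
  assert (0 < 96 * r ^ 4) by (pose proof (pow_lt r 4 hr); lra).
  nra.
Qed.

Lemma nonneg_of_sum_mul_nonneg (u v : R) : 0 <= u + v -> 0 <= u * v -> 0 <= u /\ 0 <= v.
Proof. intros hs hp. split; destruct (Rle_or_lt 0 u); destruct (Rle_or_lt 0 v); nra. Qed.

Lemma moment_triangle_param (x X Y r : R) : 0 <= X -> 0 <= Y ->
  4 * x ^ 2 + 2 * X + 2 * Y = 12 * r ^ 2 ->
  let q3 := 6 * x * (X - Y) in
  let q4 := 4 * x ^ 4 + 12 * x ^ 2 * (X + Y) + 2 * X ^ 2 + 2 * Y ^ 2 in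
  0 <= 84 * r ^ 4 - q4 /\ 0 <= q4 - 36 * r ^ 4 + 2 * r * q3 /\ 0 <= q4 - 36 * r ^ 4 - 2 * r * q3.
Proof.
  intros hX hY hr q3 q4.
  set (A := x ^ 2).
  assert (hA : 0 <= A) by apply pow2_ge_0.
  assert (hXY : 0 <= X * Y) by (apply Rmult_le_pos; lra).
  assert (hr2 : r ^ 2 = (4 * A + 2 * X + 2 * Y) / 12) by (unfold A; lra).
  assert (hr4 : r ^ 4 = ((4 * A + 2 * X + 2 * Y) / 12) ^ 2) by (rewrite <- hr2; ring).
  assert (e4 : q4 = 4 * A ^ 2 + 12 * A * (X + Y) + 2 * X ^ 2 + 2 * Y ^ 2) by (unfold q4, A; ring).
  set (L := q4 - 36 * r ^ 4).
  assert (hL : L = 8 * A * (X + Y) + (X - Y) ^ 2) by (unfold L; rewrite hr4, e4; field).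
  split.
  - replace (84 * r ^ 4 - q4) with ((4 * A - (X + Y)) ^ 2 / 3 + 4 * (X * Y))
      by (rewrite hr4, e4; field).
    pose proof (pow2_ge_0 (4 * A - (X + Y))). lra.
  - apply nonneg_of_sum_mul_nonneg.
    + replace (L + 2 * r * q3 + (L - 2 * r * q3)) with (2 * L) by ring.
      rewrite hL. pose proof (pow2_ge_0 (X - Y)).
      assert (0 <= A * (X + Y)) by (apply Rmult_le_pos; lra). lra.
    + assert (E : (L + 2 * r * q3) * (L - 2 * r * q3) = L ^ 2 - 144 * r ^ 2 * A * (X - Y) ^ 2)
        by (unfold q3, A; ring).
      rewrite E, hr2, hL.
      replace ((8 * A * (X + Y) + (X - Y) ^ 2) ^ 2
               - 144 * ((4 * A + 2 * X + 2 * Y) / 12) * A * (X - Y) ^ 2)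
        with (((X - Y) ^ 2 - 4 * A * (X + Y)) ^ 2 + 192 * A ^ 2 * (X * Y)) by field.
      pose proof (pow2_ge_0 ((X - Y) ^ 2 - 4 * A * (X + Y))). pose proof (pow2_ge_0 A). nra.
Qed.

(* The centred variables are [x + y, x - y, z - x, - x - z]. *)
Lemma cmoment_triangle (a b c d r : R) : cmoment 2 a b c d = 12 * r ^ 2 ->
  0 <= 84 * r ^ 4 - cmoment 4 a b c d /\
  0 <= cmoment 4 a b c d - 36 * r ^ 4 + 2 * r * cmoment 3 a b c d /\
  0 <= cmoment 4 a b c d - 36 * r ^ 4 - 2 * r * cmoment 3 a b c d.
Proof.
  intro hq2.
  set (x := (a + b - c - d) / 4). set (y := (a - b) / 2). set (z := (c - d) / 2).
  assert (e2 : cmoment 2 a b c d = 4 * x ^ 2 + 2 * y ^ 2 + 2 * z ^ 2)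
    by (unfold cmoment, mean4, x, y, z; field).
  assert (e3 : cmoment 3 a b c d = 6 * x * (y ^ 2 - z ^ 2))
    by (unfold cmoment, mean4, x, y, z; field).
  assert (e4 : cmoment 4 a b c d
               = 4 * x ^ 4 + 12 * x ^ 2 * (y ^ 2 + z ^ 2) + 2 * (y ^ 2) ^ 2 + 2 * (z ^ 2) ^ 2)
    by (unfold cmoment, mean4, x, y, z; field).
  rewrite e3, e4. rewrite e2 in hq2.
  apply moment_triangle_param; [apply pow2_ge_0|apply pow2_ge_0|exact hq2].
Qed.

Lemma gsum_nonneg (t w a b c d : R) : 0 <= VF t w -> 0 <= gsum t w a b c d.
Proof.
  intro hV.
  set (m := mean4 a b c d).
  pose proof (pow2_ge_0 (a - m)). pose proof (pow2_ge_0 (b - m)).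
  pose proof (pow2_ge_0 (c - m)). pose proof (pow2_ge_0 (d - m)).
  assert (hq2 : 0 <= cmoment 2 a b c d) by (unfold cmoment; fold m; lra).
  destruct (Req_dec (cmoment 2 a b c d) 0) as [e|e].
  - unfold cmoment in e; fold m in e.
    assert (a = m) by nra. assert (b = m) by nra. assert (c = m) by nra. assert (d = m) by nra.
    replace a with m by auto. replace b with m by auto.
    replace c with m by auto. replace d with m by auto.
    now apply gsum_triple_nonneg.
  - set (r := sqrt (cmoment 2 a b c d / 12)).
    assert (hr : 0 < r) by (apply sqrt_lt_R0; lra).
    assert (hr2 : cmoment 2 a b c d = 12 * r ^ 2)
      by (unfold r; rewrite pow2_sqrt; lra).
    destruct (cmoment_triangle a b c d r hr2) as [l0 [lp lm]].
    rewrite gsum_moments, hr2. fold m.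
    apply hsum_nonneg_of_vertices; auto.
    + rewrite hsum_two_two. apply Rmult_le_pos; [|apply pow2_ge_0].
      pose proof (pow2_ge_0 ((t - 1) ^ 2)). replace ((t - 1) ^ 4) with (((t - 1) ^ 2) ^ 2) by ring.
      lra.
    + rewrite hsum_three_one. now apply gsum_triple_nonneg.
    + replace (hsum t w m (12 * r ^ 2) (- (24 * r ^ 3)) (84 * r ^ 4))
        with (hsum t w m (12 * (- r) ^ 2) (24 * (- r) ^ 3) (84 * (- r) ^ 4))
        by (f_equal; ring).
      rewrite hsum_three_one. now apply gsum_triple_nonneg.
Qed.

(* Up to permutation, a degree-4 monomial in four variables is determined by its
   largest exponent and, when that is 2, by its number of vanishing exponents. *)
Definition sym_quartic_coef (c4 c31 c22 c211 c1111 : R) (i j k l : nat) : R :=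
  match Nat.max i (Nat.max j (Nat.max k l)) with
  | 4%nat => c4
  | 3%nat => c31
  | 2%nat =>
      if Nat.eqb (Nat.b2n (Nat.eqb i 0) + Nat.b2n (Nat.eqb j 0)
                  + Nat.b2n (Nat.eqb k 0) + Nat.b2n (Nat.eqb l 0)) 2
      then c22 else c211
  | 1%nat => c1111
  | _ => 0
  end.

Definition sym_quartic (c4 c31 c22 c211 c1111 : R) : form4 := fun a b c d =>
  c4 * (a^4 + b^4 + c^4 + d^4) + c31 * T31 a b c d
  + c22 * (a^2*b^2 + a^2*c^2 + a^2*d^2 + b^2*c^2 + b^2*d^2 + c^2*d^2)
  + c211 * T211 a b c d + c1111 * (a * b * c * d).

Lemma sym_quartic_is_quartic_form (c4 c31 c22 c211 c1111 : R) :
  is_quartic_form (sym_quartic c4 c31 c22 c211 c1111).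
Proof.
  exists (sym_quartic_coef c4 c31 c22 c211 c1111). intros a b c d.
  unfold sym_quartic_coef. simpl. unfold sym_quartic, T31, T211. ring.
Qed.

Lemma is_quartic_form_ext (f g : form4) :
  (forall a b c d, f a b c d = g a b c d) -> is_quartic_form f -> is_quartic_form g.
Proof.
  intros efg [coef hf]. exists coef. intros a b c d. rewrite <- efg. apply hf.
Qed.

Lemma gform_sym_quartic (t u a b c d : R) :
  let w := omega u in
  gform t u a b c d
  = sym_quartic (u^2 * pG0 t w) (u^2 * pG1 t w) (u^2 * pG2 t w) (u^2 * pG3 t w)
      (u^2 * (pG4 t w - 4 * pG0 t w - 12 * pG1 t w - 6 * pG2 t w - 12 * pG3 t w)) a b c d.
Proof. unfold gform, sym_quartic, s0, s1, s2, s3, s4, T31, T211. ring. Qed.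

Lemma gform_quartic (t u : R) : is_quartic_form (gform t u).
Proof.
  eapply is_quartic_form_ext; [|apply sym_quartic_is_quartic_form].
  intros a b c d. symmetry. apply gform_sym_quartic.
Qed.

Lemma gform_symmetric (t u : R) : is_symmetric4 (gform t u).
Proof. intros a b c d. unfold gform, s0, s1, s2, s3, s4, T31, T211. split; ring. Qed.

Lemma gsum_pos_somewhere (t w : R) : w <> 0 -> exists a b c d, 0 < gsum t w a b c d.
Proof.
  intro hw. pose proof (pow2_gt_0 w hw).
  destruct (Req_dec t 1) as [e|e].
  - exists 0, 1, 1, 1. rewrite gsum_triple. subst t.
    unfold bqf, tri_b, tri_c, pG0. nra.
  - exists 1, 1, 1, 1. rewrite gsum_triple.
    assert (0 < (t - 1) ^ 2) by (apply pow2_gt_0; lra).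
    replace ((1 - t * 1) ^ 2 * bqf (pG0 t w) (tri_b t w) (tri_c t w) 1 1)
      with (2 * w ^ 2 * ((t - 1) ^ 2) ^ 2)
      by (unfold bqf, tri_b, tri_c, pG0; ring).
    pose proof (pow2_gt_0 ((t - 1) ^ 2) ltac:(lra)). nra.
Qed.

Theorem theorem2p4 (t u : R) (hu0 : u <> 0) (hu1 : u <> 1) :
  (in_Ps44 (gform t u) <-> 0 <= VF t (omega u))
  /\ ~ in_Ps44 (opp_form (gform t u)).
Proof.
  pose proof (omega_neq0 u hu0 hu1) as hw.
  pose proof (pow2_gt_0 u hu0) as hu2.
  split; [split|].
  - intros [_ [_ hg]]. apply (VF_nonneg_of_gsum_nonneg _ _ hw).
    intros a b c d. specialize (hg a b c d). rewrite gform_gsum in hg. nra.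
  - intro hV. split; [apply gform_quartic|split; [apply gform_symmetric|]].
    intros a b c d. rewrite gform_gsum.
    apply Rmult_le_pos; [lra|now apply gsum_nonneg].
  - intros [_ [_ hg]]. destruct (gsum_pos_somewhere t (omega u) hw) as (a & b & c & d & hpos).
    specialize (hg a b c d). unfold opp_form in hg. rewrite gform_gsum in hg. nra.
Qed.
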